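(* The class of left depth two extensions is Morita invariant, and the class of right depth two extensions is Morita invariant: if $A/B$ is left (resp. right) depth two and $A/B$ is Morita equivalent to $A'/B'$, then $A'/B'$ is left (resp. right) depth two.
   Context: All rings have identity, subrings contain the identity, modules are unital; a ring extension $A/B$ means $B$ is a subring of $A$. For bimodules ${}_RX_{T}$, ${}_RY_{T}$, write $X\mid Y$ if $X$ is isomorphic (as $R$-$T$-bimodule) to a direct summand of a finite direct sum of copies of $Y$, and $X\sim Y$ if $X\mid Y$ and $Y\mid X$. $A/B$ is left depth two if ${}_BA\otimes_BA_A\mid{}_BA_A$, and right depth two if ${}_AA\otimes_BA_B\mid{}_AA_B$. $\mathrm{End}^r({}_AM)$ denotes the ring of left $A$-endomorphisms of $M$ acting on the right. A bimodule ${}_AM_{A'}$ is a Morita module if ${}_AM\sim{}_AA$ and $\mathrm{End}^r({}_AM)=A'$. Ring extensions $A/B$ and $A'/B'$ are Morita equivalent if there exist Morita modules ${}_AM_{A'}$ and ${}_BN_{B'}$ with ${}_AA\otimes_BN_{B'}\cong{}_AM_{B'}$. A class $\mathscr C$ is Morita invariant if whenever $A/B\in\mathscr C$ and $A/B$ is Morita equivalent to $A'/B'$, then $A'/B'\in\mathscr C$. *)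

From HB Require Import structures.
From mathcomp Require Import all_boot all_order all_algebra.
Set Implicit Arguments. Unset Strict Implicit. Unset Printing Implicit Defensive.
Import GRing.Theory.
Local Open Scope ring_scope.

Record bimod (R T : pzRingType) := Bimod {
  bm_car :> zmodType;
  bm_l : R -> bm_car -> bm_car;
  bm_r : bm_car -> T -> bm_car;
  bm_lD : forall r x y, bm_l r (x + y) = bm_l r x + bm_l r y;
  bm_Dl : forall r s x, bm_l (r + s) x = bm_l r x + bm_l s x;
  bm_lM : forall r s x, bm_l (r * s) x = bm_l r (bm_l s x);
  bm_l1 : forall x, bm_l 1 x = x;
  bm_rD : forall x y t, bm_r (x + y) t = bm_r x t + bm_r y t;
  bm_Dr : forall x t u, bm_r x (t + u) = bm_r x t + bm_r x u;
  bm_rM : forall x t u, bm_r x (t * u) = bm_r (bm_r x t) u;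
  bm_r1 : forall x, bm_r x 1 = x;
  bm_lr : forall r x t, bm_l r (bm_r x t) = bm_r (bm_l r x) t
}.

Definition bihom (R T : pzRingType) (X Y : bimod R T) (f : X -> Y) : Prop :=
  [/\ forall x y, f (x + y) = f x + f y,
      forall r x, f (bm_l r x) = bm_l r (f x)
    & forall x t, f (bm_r x t) = bm_r (f x) t].

Definition bm_iso (R T : pzRingType) (X Y : bimod R T) : Prop :=
  exists f : X -> Y, bihom f /\ bijective f.

(* X | Y : X is isomorphic to a direct summand of Y^n for some n, i.e. there
   are bimodule maps f_i : X -> Y, g_i : Y -> X (i < n) with
   sum_i g_i o f_i = id_X  (the components of a split mono X -> Y^n). *)
Definition bm_div (R T : pzRingType) (X Y : bimod R T) : Prop :=
  exists n (f : 'I_n -> X -> Y) (g : 'I_n -> Y -> X),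
    [/\ forall i, bihom (f i), forall i, bihom (g i)
      & forall x, \sum_(i < n) g i (f i x) = x].

Definition bm_sim (R T : pzRingType) (X Y : bimod R T) : Prop :=
  bm_div X Y /\ bm_div Y X.

Section Reg.
Variables (R S T : pzRingType) (phi : {rmorphism R -> S}) (psi : {rmorphism T -> S}).
Definition regbm : bimod R T.
Proof.
refine (@Bimod R T S (fun r s => phi r * s) (fun s t => s * psi t)
  _ _ _ _ _ _ _ _ _).
- by move=> r x y; rewrite mulrDr.
- by move=> r s x; rewrite rmorphD mulrDl.
- by move=> r s x; rewrite rmorphM mulrA.
- by move=> x; rewrite rmorph1 mul1r.
- by move=> x y t; rewrite mulrDl.
- by move=> x t u; rewrite rmorphD mulrDr.
- by move=> x t u; rewrite rmorphM mulrA.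
- by move=> x; rewrite rmorph1 mulr1.
- by move=> r x t; rewrite mulrA.
Defined.
End Reg.

Section Restr.
Variables (R R' T T' : pzRingType).
Definition restr (phi : {rmorphism R' -> R}) (psi : {rmorphism T' -> T})
  (X : bimod R T) : bimod R' T'.
Proof.
refine (@Bimod R' T' X (fun r x => bm_l (phi r) x) (fun x t => bm_r x (psi t))
  _ _ _ _ _ _ _ _ _).
- by move=> r x y; rewrite bm_lD.
- by move=> r s x; rewrite rmorphD bm_Dl.
- by move=> r s x; rewrite rmorphM bm_lM.
- by move=> x; rewrite rmorph1 bm_l1.
- by move=> x y t; rewrite bm_rD.
- by move=> x t u; rewrite rmorphD bm_Dr.
- by move=> x t u; rewrite rmorphM bm_rM.
- by move=> x; rewrite rmorph1 bm_r1.
- by move=> r x t; rewrite bm_lr.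
Defined.
End Restr.

Definition zr (R : pzRingType) : {rmorphism int -> R} := GRing.RMorphism.clone _ _ ( *~%R (1 : R)) _.

Definition leftmod (R T : pzRingType) (X : bimod R T) : bimod R int :=
  restr idfun (zr T) X.

(* (Z, beta) is a tensor product X (x)_S Y of _R X _S and _S Y _T as an
   R-T-bimodule: beta is biadditive, S-balanced, R-T-compatible, and universal
   among all such maps into R-T-bimodules. *)
Definition balanced (R S T : pzRingType) (X : bimod R S) (Y : bimod S T)
  (W : bimod R T) (g : X -> Y -> W) : Prop :=
  [/\ forall x x' y, g (x + x') y = g x y + g x' y,
      forall x y y', g x (y + y') = g x y + g x y',
      forall x s y, g (bm_r x s) y = g x (bm_l s y),
      forall r x y, g (bm_l r x) y = bm_l r (g x y)
    & forall x y t, g x (bm_r y t) = bm_r (g x y) t].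

Definition is_tensor (R S T : pzRingType) (X : bimod R S) (Y : bimod S T)
  (Z : bimod R T) (beta : X -> Y -> Z) : Prop :=
  balanced beta /\
  forall (W : bimod R T) (g : X -> Y -> W), balanced g ->
    exists h : Z -> W, [/\ bihom h, forall x y, h (beta x y) = g x y
      & forall h' : Z -> W, bihom h' -> (forall x y, h' (beta x y) = g x y) ->
          forall z, h' z = h z].

(* A ring extension A/B: B is (identified with) a subring of A via the
   injective unital ring morphism iota : B -> A. *)
Definition ring_ext (B A : pzRingType) (iota : {rmorphism B -> A}) : Prop :=
  injective iota.

(* Left depth two: _B A (x)_B A _A | _B A _A   (for the tensor product). *)
Definition left_D2 (B A : pzRingType) (iota : {rmorphism B -> A}) : Prop :=
  forall (Z : bimod B A)
    (beta : regbm iota iota -> regbm iota idfun -> Z),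
    is_tensor beta -> bm_div Z (regbm iota idfun).

(* Right depth two: _A A (x)_B A _B | _A A _B. *)
Definition right_D2 (B A : pzRingType) (iota : {rmorphism B -> A}) : Prop :=
  forall (Z : bimod A B)
    (beta : regbm idfun iota -> regbm iota iota -> Z),
    is_tensor beta -> bm_div Z (regbm idfun iota).

(* _A M _A' is a Morita module: _A M ~ _A A, and End^r(_A M) = A', i.e. the
   canonical map A' -> End^r(_A M), a' |-> (m |-> m a'), is bijective. *)
Definition morita_module (A A' : pzRingType) (M : bimod A A') : Prop :=
  [/\ bm_sim (leftmod M) (leftmod (regbm idfun idfun : bimod A A)),
      forall a1 a2 : A', (forall m : M, bm_r m a1 = bm_r m a2) -> a1 = a2
    & forall f : M -> M,
        (forall x y, f (x + y) = f x + f y) ->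
        (forall (a : A) x, f (bm_l a x) = bm_l a (f x)) ->
        exists a' : A', forall m, f m = bm_r m a'].

(* A/B and A'/B' are Morita equivalent: there are Morita modules _A M _A' and
   _B N _B' with _A A (x)_B N _B' ≅ _A M _B'  (expressed as: M, with the
   right action restricted to B', is a tensor product A (x)_B N). *)
Definition morita_equiv (B A : pzRingType) (iota : {rmorphism B -> A})
  (B' A' : pzRingType) (iota' : {rmorphism B' -> A'}) : Prop :=
  exists (M : bimod A A') (N : bimod B B'),
    [/\ morita_module M, morita_module N
      & exists beta : regbm idfun iota -> N -> restr idfun iota' M,
          is_tensor beta].

From HB Require Import structures.
From mathcomp Require Import all_boot all_order all_algebra.
From mathcomp Require Import boolp classical_sets.
Set Implicit Arguments. Unset Strict Implicit. Unset Printing Implicit Defensive.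
Import GRing.Theory.
Local Open Scope ring_scope.

(* Depth two is detected by quasibases: A/B is left depth two iff
   [a (x) 1 = sum_i t_i g_i(a)] for some B-central [t_i] in [A (x)_B A] and
   B-B-bimodule endomorphisms [g_i] of [A] (dually on the right).  Write
   [M = A (x)_B N], [A' = End(_A M)] and [B' = End(_B N)].  An endomorphism [g]
   of [A] induces [g (x) N] on [M], and postcomposition with it is a
   B'-B'-endomorphism of [A' = Hom_B(N, M)]; a central [t] yields
   [sum_k p_k (x) t (x) e_k] for a dual basis [(p_k, e_k)] of [N] (of [M] on the
   right), read in [A' (x)_B' A'] through
   [N^* (x)_B A (x)_B A (x)_A M ~ A' (x)_B' A'].  These data form a quasibase
   of A'/B'. *)

Section AdditiveMaps.
Variables (U V : zmodType) (f : U -> V).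
Hypothesis fD : {morph f : x y / x + y}.

Lemma addf0 : f 0 = 0.
Proof. by apply: (addrI (f 0)); rewrite -fD !addr0. Qed.

Lemma addfN : {morph f : x / - x}.
Proof. by move=> x; apply: (addrI (f x)); rewrite -fD !subrr addf0. Qed.

Lemma addf_sum I (s : seq I) (P : pred I) (F : I -> U) :
  f (\sum_(i <- s | P i) F i) = \sum_(i <- s | P i) f (F i).
Proof. exact: (big_morph f fD addf0). Qed.

End AdditiveMaps.

Section BimodTheory.
Variables (R T : pzRingType) (X : bimod R T).

Lemma bm_l0 r : bm_l r (0 : X) = 0.
Proof. exact: (addf0 (@bm_lD _ _ X r)). Qed.

Lemma bm_r0 t : bm_r (0 : X) t = 0.
Proof. exact: (addf0 (fun x y => @bm_rD _ _ X x y t)). Qed.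

Lemma bm_0l (x : X) : bm_l 0 x = 0.
Proof. exact: (addf0 (fun r s => @bm_Dl _ _ X r s x)). Qed.

Lemma bm_0r (x : X) : bm_r x 0 = 0.
Proof. exact: (addf0 (@bm_Dr _ _ X x)). Qed.

Lemma bm_l_sumr I (s : seq I) (P : pred I) (F : I -> X) r :
  bm_l r (\sum_(i <- s | P i) F i) = \sum_(i <- s | P i) bm_l r (F i).
Proof. exact: (addf_sum (@bm_lD _ _ X r)). Qed.

Lemma bm_l_suml I (s : seq I) (P : pred I) (F : I -> R) (x : X) :
  bm_l (\sum_(i <- s | P i) F i) x = \sum_(i <- s | P i) bm_l (F i) x.
Proof. exact: (addf_sum (fun r s => @bm_Dl _ _ X r s x)). Qed.

Lemma bm_r_suml I (s : seq I) (P : pred I) (F : I -> X) t :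
  bm_r (\sum_(i <- s | P i) F i) t = \sum_(i <- s | P i) bm_r (F i) t.
Proof. exact: (addf_sum (fun x y => @bm_rD _ _ X x y t)). Qed.

Lemma bm_r_sumr I (s : seq I) (P : pred I) (F : I -> T) (x : X) :
  bm_r x (\sum_(i <- s | P i) F i) = \sum_(i <- s | P i) bm_r x (F i).
Proof. exact: (addf_sum (@bm_Dr _ _ X x)). Qed.

End BimodTheory.

(* The tensor product is built as formal sums of pairs, two formal sums being
   identified when no biadditive S-balanced map into an abelian group tells
   them apart. *)
Section TensorConstruction.
Variables (R S T : pzRingType) (X : bimod R S) (Y : bimod S T).

Definition zbalanced (W : zmodType) (g : X -> Y -> W) : Prop :=
  [/\ forall x x' y, g (x + x') y = g x y + g x' y,
      forall x y y', g x (y + y') = g x y + g x y'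
    & forall x s y, g (bm_r x s) y = g x (bm_l s y)].

Lemma balanced_zbalanced (W : bimod R T) (g : X -> Y -> W) :
  balanced g -> zbalanced g.
Proof. by case. Qed.

Definition tsum (W : zmodType) (g : X -> Y -> W) (s : seq (X * Y)) : W :=
  \sum_(p <- s) g p.1 p.2.

Definition tequiv (s s' : seq (X * Y)) : Prop :=
  forall (W : zmodType) (g : X -> Y -> W), zbalanced g -> tsum g s = tsum g s'.

Lemma tequiv_sym s s' : tequiv s s' -> tequiv s' s.
Proof. by move=> e W g gB; rewrite e. Qed.

Lemma tequiv_trans s1 s2 s3 : tequiv s1 s2 -> tequiv s2 s3 -> tequiv s1 s3.
Proof. by move=> e1 e2 W g gB; rewrite e1 // e2. Qed.

Record tensor := Tensor {
  tclass : seq (X * Y) -> Prop;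
  tclassP : exists s, tclass = tequiv s }.
HB.instance Definition _ := gen_eqMixin tensor.
HB.instance Definition _ := gen_choiceMixin tensor.

Definition tpi (s : seq (X * Y)) : tensor := Tensor (ex_intro _ s erefl).

Lemma tensor_eq (q q' : tensor) : tclass q = tclass q' -> q = q'.
Proof.
case: q q' => P e [P' e'] /= eP; subst P'.
by rewrite (Prop_irrelevance e e').
Qed.

Lemma tpi_eq s s' : tequiv s s' -> tpi s = tpi s'.
Proof.
move=> e; apply: tensor_eq; apply: funext => u; apply: propext.
by split; apply: tequiv_trans; [apply: tequiv_sym|].
Qed.

Lemma tpi_tequiv s s' : tpi s = tpi s' -> tequiv s s'.
Proof. by move=> e; have : tclass (tpi s) s' by rewrite e. Qed.

Lemma tpi_surj (q : tensor) : exists s, q = tpi s.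
Proof. by case: q => P [s e]; exists s; apply: tensor_eq. Qed.

Definition trepr (q : tensor) : seq (X * Y) := projT1 (cid (tpi_surj q)).

Lemma treprK q : tpi (trepr q) = q.
Proof. by rewrite /trepr; case: cid => s /= ->. Qed.

Lemma trepr_tequiv s : tequiv (trepr (tpi s)) s.
Proof. by apply: tpi_tequiv; rewrite treprK. Qed.

Lemma tsum_cat (W : zmodType) (g : X -> Y -> W) s s' :
  tsum g (s ++ s') = tsum g s + tsum g s'.
Proof. exact: big_cat. Qed.

Lemma tequiv_cat s1 s1' s2 s2' :
  tequiv s1 s1' -> tequiv s2 s2' -> tequiv (s1 ++ s2) (s1' ++ s2').
Proof. by move=> e1 e2 W g gB; rewrite !tsum_cat e1 // e2. Qed.

Definition negpair (p : X * Y) : X * Y := (- p.1, p.2).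

Lemma tsum_negpair (W : zmodType) (g : X -> Y -> W) s :
  zbalanced g -> tsum g (map negpair s) = - tsum g s.
Proof.
case=> gDl _ _; rewrite /tsum big_map (addf_sum (@opprD W)).
by apply: eq_bigr => p _; rewrite (addfN (fun x x' => gDl x x' p.2)).
Qed.

Lemma tequiv_negpair s s' : tequiv s s' -> tequiv (map negpair s) (map negpair s').
Proof. by move=> e W g gB; rewrite !tsum_negpair // e. Qed.

Definition tadd q q' := tpi (trepr q ++ trepr q').
Definition topp q := tpi (map negpair (trepr q)).

Lemma taddE s s' : tadd (tpi s) (tpi s') = tpi (s ++ s').
Proof. by apply: tpi_eq; apply: tequiv_cat; apply: trepr_tequiv. Qed.

Lemma toppE s : topp (tpi s) = tpi (map negpair s).
Proof. by apply: tpi_eq; apply: tequiv_negpair; apply: trepr_tequiv. Qed.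

Lemma taddA : associative tadd.
Proof.
move=> q1 q2 q3; have [s1 ->] := tpi_surj q1; have [s2 ->] := tpi_surj q2.
by have [s3 ->] := tpi_surj q3; rewrite !taddE catA.
Qed.

Lemma taddC : commutative tadd.
Proof.
move=> q1 q2; have [s1 ->] := tpi_surj q1; have [s2 ->] := tpi_surj q2.
by rewrite !taddE; apply: tpi_eq => W g gB; rewrite !tsum_cat addrC.
Qed.

Lemma tadd0 : left_id (tpi [::]) tadd.
Proof. by move=> q; have [s ->] := tpi_surj q; rewrite taddE. Qed.

Lemma taddN : left_inverse (tpi [::]) topp tadd.
Proof.
move=> q; have [s ->] := tpi_surj q; rewrite toppE taddE.
by apply: tpi_eq => W g gB; rewrite tsum_cat tsum_negpair // addNr /tsum big_nil.
Qed.

HB.instance Definition _ := GRing.isZmodule.Build tensor taddA taddC tadd0 taddN.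

Lemma tpi_cat s s' : tpi (s ++ s') = tpi s + tpi s'.
Proof. by rewrite -taddE. Qed.

Definition tactl r q : tensor :=
  tpi (map (fun p => (bm_l r p.1, p.2)) (trepr q)).
Definition tactr q t : tensor :=
  tpi (map (fun p => (p.1, bm_r p.2 t)) (trepr q)).

Lemma tactlE r s : tactl r (tpi s) = tpi (map (fun p => (bm_l r p.1, p.2)) s).
Proof.
apply: tpi_eq => W g [gDl gDr gM]; rewrite /tsum !big_map /=.
have gB : zbalanced (fun x y => g (bm_l r x) y).
  by split=> // [x x' y|x s0 y]; rewrite ?bm_lD ?gDl // bm_lr gM.
by move: (trepr_tequiv s gB); rewrite /tsum.
Qed.

Lemma tactrE t s : tactr (tpi s) t = tpi (map (fun p => (p.1, bm_r p.2 t)) s).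
Proof.
apply: tpi_eq => W g [gDl gDr gM]; rewrite /tsum !big_map /=.
have gB : zbalanced (fun x y => g x (bm_r y t)).
  by split=> // [x y y'|x s0 y]; rewrite ?bm_rD ?gDr // gM bm_lr.
by move: (trepr_tequiv s gB); rewrite /tsum.
Qed.

Definition tensor_bimod : bimod R T.
Proof.
refine (@Bimod R T tensor tactl tactr _ _ _ _ _ _ _ _ _).
- move=> r q q'; have [s ->] := tpi_surj q; have [s' ->] := tpi_surj q'.
  by rewrite -tpi_cat !tactlE -tpi_cat map_cat.
- move=> r r' q; have [s ->] := tpi_surj q; rewrite !tactlE -tpi_cat.
  apply: tpi_eq => W g [gDl _ _]; rewrite tsum_cat /tsum !big_map -big_split /=.
  by apply: eq_bigr => p _; rewrite bm_Dl gDl.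
- move=> r r' q; have [s ->] := tpi_surj q; rewrite !tactlE -map_comp.
  by congr tpi; apply: eq_map => p; rewrite /= bm_lM.
- move=> q; have [s ->] := tpi_surj q; rewrite tactlE.
  by congr tpi; rewrite -[RHS]map_id; apply: eq_map => -[x y]; rewrite /= bm_l1.
- move=> q q' t; have [s ->] := tpi_surj q; have [s' ->] := tpi_surj q'.
  by rewrite -tpi_cat !tactrE -tpi_cat map_cat.
- move=> q t t'; have [s ->] := tpi_surj q; rewrite !tactrE -tpi_cat.
  apply: tpi_eq => W g [_ gDr _]; rewrite tsum_cat /tsum !big_map -big_split /=.
  by apply: eq_bigr => p _; rewrite bm_Dr gDr.
- move=> q t t'; have [s ->] := tpi_surj q; rewrite !tactrE -map_comp.
  by congr tpi; apply: eq_map => p; rewrite /= bm_rM.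
- move=> q; have [s ->] := tpi_surj q; rewrite tactrE.
  by congr tpi; rewrite -[RHS]map_id; apply: eq_map => -[x y]; rewrite /= bm_r1.
- move=> r q t; have [s ->] := tpi_surj q.
  by rewrite tactrE !tactlE tactrE -!map_comp.
Defined.

Definition tens (x : X) (y : Y) : tensor_bimod := tpi [:: (x, y)].

Lemma tensor_ind (P : tensor_bimod -> Prop) :
  P 0 -> (forall q q', P q -> P q' -> P (q + q')) ->
  (forall x y, P (tens x y)) -> forall q, P q.
Proof.
move=> P0 PD Ptens q; have [s ->] := tpi_surj q.
elim: s => [|[x y] s IHs]; first exact: P0.
by rewrite -cat1s tpi_cat; apply: PD => //; apply: Ptens.
Qed.

Lemma tens_balanced : balanced tens.
Proof.
split=> [x x' y|x y y'|x s y|r x y|x y t]; last 2 first.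
- by rewrite /tens /= tactlE.
- by rewrite /tens /= tactrE.
all: rewrite /tens -?tpi_cat; apply: tpi_eq => W g [gDl gDr gM].
all: by rewrite /tsum ?big_cons ?big_nil /= ?addr0 ?gDl ?gDr ?gM.
Qed.

Definition tlift (W : zmodType) (g : X -> Y -> W) (q : tensor_bimod) : W :=
  tsum g (trepr q).

Section Lift.
Variables (W : zmodType) (g : X -> Y -> W).
Hypothesis gB : zbalanced g.

Lemma tliftD : {morph tlift g : q q' / q + q'}.
Proof.
move=> q q'; have [s ->] := tpi_surj q; have [s' ->] := tpi_surj q'.
by rewrite -tpi_cat /tlift !(trepr_tequiv _ gB) tsum_cat.
Qed.

Lemma tlift_tens x y : tlift g (tens x y) = g x y.
Proof. by rewrite /tlift (trepr_tequiv _ gB) /tsum big_seq1. Qed.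

End Lift.

Lemma tlift_bihom (W : bimod R T) (g : X -> Y -> W) : balanced g -> bihom (tlift g).
Proof.
move=> gB; have [_ _ _ tl tr] := tens_balanced; have [_ _ _ gl gr] := gB.
have g0B := balanced_zbalanced gB.
split; first exact: tliftD.
- move=> r; elim/tensor_ind => [|q q' eq eq'|x y].
  + by rewrite bm_l0 (addf0 (tliftD g0B)) bm_l0.
  + by rewrite bm_lD !tliftD // eq eq' bm_lD.
  + by rewrite -tl !tlift_tens.
- move=> q t; elim/tensor_ind: q => [|q q' eq eq'|x y].
  + by rewrite bm_r0 (addf0 (tliftD g0B)) bm_r0.
  + by rewrite bm_rD !tliftD // eq eq' bm_rD.
  + by rewrite -tr !tlift_tens.
Qed.

Lemma tens_is_tensor : is_tensor tens.
Proof.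
split=> [|W g gB]; first exact: tens_balanced.
have g0B := balanced_zbalanced gB.
exists (tlift g); split=> [|x y|h [hD _ _] hE].
- exact: tlift_bihom.
- exact: tlift_tens.
- elim/tensor_ind => [|q q' eq eq'|x y].
  + by rewrite (addf0 hD) (addf0 (tliftD g0B)).
  + by rewrite hD tliftD // eq eq'.
  + by rewrite hE tlift_tens.
Qed.

End TensorConstruction.

Section TensorProperties.
Variables (R S T : pzRingType) (X : bimod R S) (Y : bimod S T).
Variables (Z : bimod R T) (beta : X -> Y -> Z).
Hypothesis betaT : is_tensor beta.

Lemma is_tensor_retract : exists h : Z -> tensor_bimod X Y,
  [/\ {morph h : z z' / z + z'}, forall x y, h (beta x y) = tens x y
     & forall z, tlift beta (h z) = z].
Proof.
have [betaB betaU] := betaT.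
have [h [[hD hl hr] hE _]] := betaU _ _ (tens_balanced X Y).
have [tlD tll tlr] := tlift_bihom betaB.
have [h' [_ _ betaE]] := betaU _ _ betaB.
exists h; split=> // z; rewrite (betaE (fun z => tlift beta (h z))).
- by apply/esym/betaE.
- by split=> [z1 z2|r z1|z1 t]; rewrite ?hD ?hl ?hr ?tlD ?tll ?tlr.
- by move=> x y; rewrite hE tlift_tens //; apply: balanced_zbalanced.
Qed.

Lemma is_tensor_ind (P : Z -> Prop) :
  P 0 -> (forall z z', P z -> P z' -> P (z + z')) ->
  (forall x y, P (beta x y)) -> forall z, P z.
Proof.
move=> P0 PD Pbeta z; have [h [_ _ hK]] := is_tensor_retract.
have beta0B := balanced_zbalanced (proj1 betaT).
rewrite -[z]hK; elim/tensor_ind: (h z) => [|q q'|x y].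
- by rewrite (addf0 (tliftD beta0B)).
- by rewrite tliftD //; apply: PD.
- by rewrite tlift_tens.
Qed.

Lemma is_tensor_lift (W : zmodType) (g : X -> Y -> W) : zbalanced g ->
  exists G : Z -> W, {morph G : z z' / z + z'} /\ forall x y, G (beta x y) = g x y.
Proof.
move=> gB; have [h [hD hE _]] := is_tensor_retract.
exists (fun z => tlift g (h z)); split=> [z z'|x y]; first by rewrite hD tliftD.
by rewrite hE tlift_tens.
Qed.

Lemma is_tensor_ext (W : zmodType) (F G : Z -> W) :
  {morph F : z z' / z + z'} -> {morph G : z z' / z + z'} ->
  (forall x y, F (beta x y) = G (beta x y)) -> F =1 G.
Proof.
move=> FD GD FGbeta; elim/is_tensor_ind => [|z z' eq eq'|//].
  by rewrite (addf0 FD) (addf0 GD).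
by rewrite FD GD eq eq'.
Qed.

End TensorProperties.

Section LinearForms.
Variables (R T : pzRingType) (X : bimod R T).

Definition lin_form (f : X -> R) : Prop :=
  {morph f : x y / x + y} /\ forall r x, f (bm_l r x) = r * f x.

Lemma lin_form_sum I (s : seq I) (P : pred I) (F : I -> X -> R) :
  (forall i, lin_form (F i)) -> lin_form (fun x => \sum_(i <- s | P i) F i x).
Proof.
move=> Flin; split=> [x y|r x]; last first.
  by rewrite mulr_sumr; apply: eq_bigr => i _; case: (Flin i) => _ ->.
by rewrite -big_split; apply: eq_bigr => i _; case: (Flin i) => ->.
Qed.

Lemma lin_form_mulr f r : lin_form f -> lin_form (fun x => f x * r).
Proof. by case=> fD fl; split=> [x y|r' x]; rewrite ?fD ?mulrDl // fl mulrA. Qed.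

Lemma lin_form_actr f t : lin_form f -> lin_form (fun x => f (bm_r x t)).
Proof. by case=> fD fl; split=> [x y|r x]; rewrite ?bm_rD ?fD // -bm_lr fl. Qed.

Definition dual_basis n (f : 'I_n -> X -> R) (e : 'I_n -> X) : Prop :=
  (forall k, lin_form (f k)) /\ forall x, \sum_(k < n) bm_l (f k x) (e k) = x.

Lemma dual_basis_form n (f : 'I_n -> X -> R) (e : 'I_n -> X) (q : X -> R) x :
  dual_basis f e -> lin_form q -> q x = \sum_(k < n) f k x * q (e k).
Proof.
case=> _ fe [qD ql]; rewrite -{1}(fe x) (addf_sum qD).
by apply: eq_bigr => k _; rewrite ql.
Qed.

Definition generating_system n (f : 'I_n -> X -> R) (e : 'I_n -> X) : Prop :=
  (forall k, lin_form (f k)) /\ \sum_(k < n) f k (e k) = 1.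

Lemma div_regular_dual_basis :
  bm_div (leftmod X) (leftmod (regbm idfun idfun : bimod R R)) ->
  exists n (f : 'I_n -> X -> R) (e : 'I_n -> X), dual_basis f e.
Proof.
move=> [n [f [g [fh gh fg]]]]; exists n, f, (fun k => g k 1); split.
  by move=> k; have [fD fl _] := fh k; split=> // r x; apply: fl.
move=> x; rewrite -[RHS]fg; apply: eq_bigr => k _.
by have [_ gl _] := gh k; have := gl (f k x) 1; rewrite /= mulr1 => <-.
Qed.

Lemma regular_div_generating_system :
  bm_div (leftmod (regbm idfun idfun : bimod R R)) (leftmod X) ->
  exists n (f : 'I_n -> X -> R) (e : 'I_n -> X), generating_system f e.
Proof.
move=> [n [f [g [fh gh fg]]]]; exists n, g, (fun k => f k 1); split=> //.
by move=> k; have [gD gl _] := gh k; split=> // r x; apply: gl.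
Qed.

End LinearForms.

Definition bimod_endo (B A : pzRingType) (iota : {rmorphism B -> A}) (phi : A -> A) :=
  [/\ {morph phi : x y / x + y}, forall b a, phi (iota b * a) = iota b * phi a
    & forall a b, phi (a * iota b) = phi a * iota b].

Section Quasibases.
Variables (B A : pzRingType) (iota : {rmorphism B -> A}).

Local Notation tensL := (@tens _ _ _ (regbm iota iota) (regbm iota idfun)).
Local Notation tensR := (@tens _ _ _ (regbm idfun iota) (regbm iota iota)).

Definition left_quasibase (Z : bimod B A)
  (beta : regbm iota iota -> regbm iota idfun -> Z)
  n (t : 'I_n -> Z) (g : 'I_n -> A -> A) : Prop :=
  [/\ forall i, bimod_endo iota (g i),
      forall i b, bm_l b (t i) = bm_r (t i) (iota b)
    & forall a, beta a 1 = \sum_(i < n) bm_r (t i) (g i a)].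

Definition right_quasibase (Z : bimod A B)
  (beta : regbm idfun iota -> regbm iota iota -> Z)
  n (t : 'I_n -> Z) (g : 'I_n -> A -> A) : Prop :=
  [/\ forall i, bimod_endo iota (g i),
      forall i b, bm_r (t i) b = bm_l (iota b) (t i)
    & forall a, beta 1 a = \sum_(i < n) bm_l (g i a) (t i)].

Lemma left_D2_quasibase : left_D2 iota ->
  exists n t (g : 'I_n -> A -> A), left_quasibase tensL t g.
Proof.
move=> /(_ _ _ (tens_is_tensor _ _)) [n [f [g [fh gh fg]]]].
have [tDl _ tM tl tr] := tens_balanced (regbm iota iota) (regbm iota idfun).
exists n, (fun i => g i 1), (fun i a => f i (tensL a 1)); split.
- move=> i; have [fD fl fr] := fh i; split=> [x y|b a|a b] /=.
  + by rewrite tDl fD.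
  + by rewrite -[RHS]fl -tl.
  + rewrite -[RHS]fr -tr /= -[a * iota b]/(bm_r (a : regbm iota iota) b).
    by rewrite tM /= mulr1 mul1r.
- by move=> i b; have [_ gl gr] := gh i; rewrite -gl -gr /= mulr1 mul1r.
- move=> a; rewrite -[LHS]fg; apply: eq_bigr => i _.
  by have [_ _ gr] := gh i; rewrite -gr /= mul1r.
Qed.

Lemma right_D2_quasibase : right_D2 iota ->
  exists n t (g : 'I_n -> A -> A), right_quasibase tensR t g.
Proof.
move=> /(_ _ _ (tens_is_tensor _ _)) [n [f [g [fh gh fg]]]].
have [_ tDr tM tl tr] := tens_balanced (regbm idfun iota) (regbm iota iota).
exists n, (fun i => g i 1), (fun i a => f i (tensR 1 a)); split.
- move=> i; have [fD fl fr] := fh i; split=> [x y|b a|a b] /=.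
  + by rewrite tDr fD.
  + rewrite -[RHS]fl -tl /= -[iota b * a]/(bm_l b (a : regbm iota iota)).
    by rewrite -tM /= mulr1 mul1r.
  + by rewrite -[RHS]fr -tr.
- by move=> i b; have [_ gl gr] := gh i; rewrite -gl -gr /= mulr1 mul1r.
- move=> a; rewrite -[LHS]fg; apply: eq_bigr => i _.
  by have [_ gl _] := gh i; rewrite -gl /= mulr1.
Qed.

Lemma left_quasibase_div (Z : bimod B A)
    (beta : regbm iota iota -> regbm iota idfun -> Z)
    n (t : 'I_n -> Z) (g : 'I_n -> A -> A) :
  is_tensor beta -> left_quasibase beta t g -> bm_div Z (regbm iota idfun).
Proof.
move=> betaT [gE tC tE]; have [[_ _ _ _ betar] betaU] := betaT.
have /choice [p pP] : forall i, exists p : Z -> regbm iota idfun,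
    bihom p /\ forall x y, p (beta x y) = g i x * y.
  move=> i; have [gD gl gr] := gE i.
  have [|p [pH pE _]] := betaU _ (fun x y => g i x * y : regbm iota idfun).
    split=> [x x' y|x x' y|x b y|b x y|x y a] /=; rewrite ?gD ?mulrDl ?mulrDr //.
    - by rewrite gr mulrA.
    - by rewrite gl mulrA.
    - by rewrite mulrA.
  by exists p.
exists n, p, (fun i a => bm_r (t i) a); split.
- by move=> i; case: (pP i).
- move=> i; split=> [x y|b x|x a] /=; rewrite ?bm_Dr // ?bm_rM //.
  by rewrite -tC bm_lr.
have pD i : {morph p i : z z' / z + z'} by case: (pP i) => -[].
elim/(is_tensor_ind betaT) => [|z z' eq eq'|x y].
- by apply: big1 => i _; rewrite (addf0 (pD i)) bm_0r.
- by under eq_bigr do rewrite pD bm_Dr; rewrite big_split /= eq eq'.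
- have betaE : beta x y = bm_r (beta x 1) y by rewrite -betar /= mul1r.
  rewrite [in RHS]betaE tE bm_r_suml; apply: eq_bigr => i _.
  by rewrite (proj2 (pP i)) bm_rM.
Qed.

Lemma right_quasibase_div (Z : bimod A B)
    (beta : regbm idfun iota -> regbm iota iota -> Z)
    n (t : 'I_n -> Z) (g : 'I_n -> A -> A) :
  is_tensor beta -> right_quasibase beta t g -> bm_div Z (regbm idfun iota).
Proof.
move=> betaT [gE tC tE]; have [[_ _ _ betal _] betaU] := betaT.
have /choice [p pP] : forall i, exists p : Z -> regbm idfun iota,
    bihom p /\ forall x y, p (beta x y) = x * g i y.
  move=> i; have [gD gl gr] := gE i.
  have [|p [pH pE _]] := betaU _ (fun x y => x * g i y : regbm idfun iota).
    split=> [x x' y|x x' y|x b y|a x y|x y b] /=; rewrite ?gD ?mulrDl ?mulrDr //.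
    - by rewrite gl mulrA.
    - by rewrite mulrA.
    - by rewrite gr mulrA.
  by exists p.
exists n, p, (fun i a => bm_l a (t i)); split.
- by move=> i; case: (pP i).
- move=> i; split=> [x y|a x|x b] /=; rewrite ?bm_Dl // ?bm_lM //.
  by rewrite -tC bm_lr.
have pD i : {morph p i : z z' / z + z'} by case: (pP i) => -[].
elim/(is_tensor_ind betaT) => [|z z' eq eq'|x y].
- by apply: big1 => i _; rewrite (addf0 (pD i)) bm_0l.
- by under eq_bigr do rewrite pD bm_Dl; rewrite big_split /= eq eq'.
- have betaE : beta x y = bm_l x (beta 1 y) by rewrite -betal /= mulr1.
  rewrite [in RHS]betaE tE bm_l_sumr; apply: eq_bigr => i _.
  by rewrite (proj2 (pP i)) bm_lM.
Qed.

End Quasibases.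

Section MoritaModules.
Variables (A A' : pzRingType) (M : bimod A A').
Hypothesis Mmor : morita_module M.

Lemma morita_faithful (x y : A') : (forall m : M, bm_r m x = bm_r m y) -> x = y.
Proof. by case: Mmor => _ + _; apply. Qed.

Lemma morita_full (f : M -> M) : {morph f : m m' / m + m'} ->
  (forall a m, f (bm_l a m) = bm_l a (f m)) -> exists x : A', forall m, f m = bm_r m x.
Proof. by case: Mmor => _ _; apply. Qed.

End MoritaModules.

Section MoritaEquivalence.
Variables (B A B' A' : pzRingType) (iota : {rmorphism B -> A}).
Variable iota' : {rmorphism B' -> A'}.
Variables (M : bimod A A') (N : bimod B B').
Hypotheses (Mmor : morita_module M) (Nmor : morita_module N).
Variable bt : regbm idfun iota -> N -> restr idfun iota' M.
Hypothesis btT : is_tensor bt.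

Let mt (a : A) (n : N) : M := bt a n.

Lemma mtDl a a' n : mt (a + a') n = mt a n + mt a' n.
Proof. by case: btT => -[+ _ _ _ _] _; apply. Qed.

Lemma mtDr a n n' : mt a (n + n') = mt a n + mt a n'.
Proof. by case: btT => -[_ + _ _ _] _; apply. Qed.

Lemma mt_mid a b n : mt (a * iota b) n = mt a (bm_l b n).
Proof. by case: btT => -[_ _ + _ _] _; apply. Qed.

Lemma mt_actl a' a n : mt (a' * a) n = bm_l a' (mt a n).
Proof. by case: btT => -[_ _ _ + _] _; apply. Qed.

Lemma mt_actr a n b' : mt a (bm_r n b') = bm_r (mt a n) (iota' b').
Proof. by case: btT => -[_ _ _ _ +] _; apply. Qed.

Lemma mt1 a n : mt a n = bm_l a (mt 1 n).
Proof. by rewrite -mt_actl mulr1. Qed.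

Lemma mt1_actl b n : mt 1 (bm_l b n) = bm_l (iota b) (mt 1 n).
Proof. by rewrite -mt_mid mul1r mt1. Qed.

Lemma mt_sumr a I (s : seq I) (P : pred I) (F : I -> N) :
  mt a (\sum_(i <- s | P i) F i) = \sum_(i <- s | P i) mt a (F i).
Proof. exact: (addf_sum (mtDr a)). Qed.

Lemma mt_ind (P : M -> Prop) :
  P 0 -> (forall m m', P m -> P m' -> P (m + m')) ->
  (forall a n, P (mt a n)) -> forall m, P m.
Proof. exact: (is_tensor_ind btT). Qed.

Lemma mt_ext (W : zmodType) (F G : M -> W) :
  {morph F : m m' / m + m'} -> {morph G : m m' / m + m'} ->
  (forall a n, F (mt a n) = G (mt a n)) -> F =1 G.
Proof. exact: (is_tensor_ext btT). Qed.

Lemma mt_lift (W : zmodType) (g : A -> N -> W) :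
  (forall a a' n, g (a + a') n = g a n + g a' n) ->
  (forall a n n', g a (n + n') = g a n + g a n') ->
  (forall a b n, g (a * iota b) n = g a (bm_l b n)) ->
  exists G : M -> W, {morph G : m m' / m + m'} /\ forall a n, G (mt a n) = g a n.
Proof. by move=> gDl gDr gM; apply: (is_tensor_lift btT); split. Qed.

Lemma endo_ext (x y : A') :
  (forall a n, bm_r (mt a n) x = bm_r (mt a n) y) -> x = y.
Proof.
move=> xy; apply: (morita_faithful Mmor); elim/mt_ind => [|m m' eq eq'|//].
  by rewrite !bm_r0.
by rewrite !bm_rD eq eq'.
Qed.

Definition Blinear (h : N -> M) : Prop :=
  {morph h : n n' / n + n'} /\ forall b n, h (bm_l b n) = bm_l (iota b) (h n).

(* [A' = End(_A M)] and [M = A (x)_B N], so B-linear maps [N -> M] are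
   restrictions of elements of [A']. *)
Definition endo (h : N -> M) : A' :=
  xget 0 (fun x => forall a n, bm_r (mt a n) x = bm_l a (h n)).

Lemma endoE h : Blinear h -> forall a n, bm_r (mt a n) (endo h) = bm_l a (h n).
Proof.
case=> hD hl.
suff: exists x, forall a n, bm_r (mt a n) x = bm_l a (h n) by apply: xgetPex.
have [|||G [GD GE]] := @mt_lift M (fun a n => bm_l a (h n)).
- by move=> a a' n; rewrite bm_Dl.
- by move=> a n n'; rewrite hD bm_lD.
- by move=> a b n; rewrite hl bm_lM.
have [|x Gx] := morita_full Mmor GD.
  move=> a; elim/mt_ind => [|m m' eq eq'|a' n].
  - by rewrite bm_l0 (addf0 GD) bm_l0.
  - by rewrite bm_lD !GD eq eq' bm_lD.
  - by rewrite -mt_actl !GE bm_lM.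
by exists x => a n; rewrite -Gx GE.
Qed.

(* Rank one operators: [rank1NM f m] is [a (x) n |-> a f(n) m] in [A'];
   [rank1NN f n : B'] and [rank1MM F m : A'] are [x |-> f(x) n] and
   [x |-> F(x) m]. *)
Definition rank1NM (f : N -> B) (m : M) : A' := endo (fun n => bm_l (iota (f n)) m).

Lemma rank1NME f m a n : lin_form f ->
  bm_r (mt a n) (rank1NM f m) = bm_l (a * iota (f n)) m.
Proof.
case=> fD fl; rewrite endoE ?bm_lM //.
by split=> [n1 n2|b n1]; rewrite ?fD ?rmorphD ?bm_Dl // fl rmorphM bm_lM.
Qed.

Lemma rank1NMD f : lin_form f -> {morph rank1NM f : m m' / m + m'}.
Proof.
by move=> flin m m'; apply: endo_ext => a n; rewrite bm_Dr !rank1NME // bm_lD.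
Qed.

Lemma rank1NM_actr f m x : lin_form f -> rank1NM f (bm_r m x) = rank1NM f m * x.
Proof. by move=> flin; apply: endo_ext => a n; rewrite bm_rM !rank1NME // bm_lr. Qed.

Lemma rank1NM_actl f b m : lin_form f ->
  rank1NM f (bm_l (iota b) m) = rank1NM (fun n => f n * b) m.
Proof.
move=> flin; apply: endo_ext => a n.
rewrite rank1NME // rank1NME; last exact: lin_form_mulr.
by rewrite -bm_lM rmorphM mulrA.
Qed.

Lemma rank1NM_mull f b' m : lin_form f ->
  iota' b' * rank1NM f m = rank1NM (fun n => f (bm_r n b')) m.
Proof.
move=> flin; apply: endo_ext => a n.
by rewrite bm_rM -mt_actr rank1NME // rank1NME //; apply: lin_form_actr.
Qed.


Lemma rank1NM_suml I (s : seq I) (P : pred I) (F : I -> N -> B) m :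
  (forall i, lin_form (F i)) ->
  rank1NM (fun n => \sum_(i <- s | P i) F i n) m = \sum_(i <- s | P i) rank1NM (F i) m.
Proof.
move=> Flin; apply: endo_ext => a n; rewrite bm_r_sumr rank1NME; last first.
  exact: lin_form_sum.
rewrite rmorph_sum mulr_sumr bm_l_suml; apply: eq_bigr => i _.
by rewrite rank1NME.
Qed.

Definition rank1NN (f : N -> B) (n : N) : B' :=
  xget 0 (fun b' => forall x, bm_r x b' = bm_l (f x) n).

Lemma rank1NNE f n x : lin_form f -> bm_r x (rank1NN f n) = bm_l (f x) n.
Proof.
case=> fD fl; move: x.
suff: exists b', forall x, bm_r x b' = bm_l (f x) n by apply: xgetPex.
have [||b' fb'] := morita_full Nmor (f := fun x => bm_l (f x) n).
- by move=> x y; rewrite fD bm_Dl.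
- by move=> b x; rewrite fl bm_lM.
by exists b' => x; rewrite fb'.
Qed.

Lemma rank1NN_rank1NM f n y : lin_form f ->
  iota' (rank1NN f n) * y = rank1NM f (bm_r (mt 1 n) y).
Proof.
move=> flin; apply: endo_ext => a x.
by rewrite bm_rM -mt_actr rank1NNE // rank1NME // bm_lr -mt1 mt_mid.
Qed.

Variables (nv : nat) (v : 'I_nv -> N -> B) (ev : 'I_nv -> N).
Hypothesis vgen : generating_system v ev.

Lemma generating_system_decomp n : n = \sum_(l < nv) bm_r (ev l) (rank1NN (v l) n).
Proof.
have [vlin v1] := vgen; under eq_bigr => l _ do rewrite rank1NNE //.
by rewrite -bm_l_suml v1 bm_l1.
Qed.

Definition rlinear (X : N -> A') : Prop :=
  {morph X : n n' / n + n'} /\ forall n b', X (bm_r n b') = X n * iota' b'.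

(* [contract X] factors [(n, y) |-> bb (X n) y] through
   [(n, y) |-> (1 (x) n) y] (lemma [bb_contract]); this is where the
   generating system of [N] is used. *)
Section Contraction.
Variables (W : zmodType) (bb : A' -> A' -> W).
Hypothesis bbDl : forall x x' y, bb (x + x') y = bb x y + bb x' y.
Hypothesis bbDr : forall x y y', bb x (y + y') = bb x y + bb x y'.
Hypothesis bbM : forall x b' y, bb (x * iota' b') y = bb x (iota' b' * y).

Definition contract (X : N -> A') (m : M) : W :=
  \sum_(l < nv) bb (X (ev l)) (rank1NM (v l) m).

Lemma contractDr X : {morph contract X : m m' / m + m'}.
Proof.
move=> m m'; rewrite /contract -big_split; apply: eq_bigr => l _.
by rewrite rank1NMD ?bbDr //; case: vgen.
Qed.

Lemma contract_sumr X I (s : seq I) (P : pred I) (F : I -> M) :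
  contract X (\sum_(i <- s | P i) F i) = \sum_(i <- s | P i) contract X (F i).
Proof. exact: (addf_sum (contractDr X)). Qed.

Lemma contractDl X Y m :
  contract (fun n => X n + Y n) m = contract X m + contract Y m.
Proof. by rewrite /contract -big_split; apply: eq_bigr => l _; rewrite bbDl. Qed.

Lemma contract_suml I (s : seq I) (P : pred I) (F : I -> N -> A') m :
  contract (fun n => \sum_(i <- s | P i) F i n) m =
  \sum_(i <- s | P i) contract (F i) m.
Proof.
rewrite /contract exchange_big /=; apply: eq_bigr => l _.
exact: (addf_sum (fun x x' => bbDl x x' _)).
Qed.

Lemma bb_contract X n y : rlinear X -> bb (X n) y = contract X (bm_r (mt 1 n) y).
Proof.
case=> XD Xr; rewrite {1}(generating_system_decomp n) (addf_sum XD).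
rewrite (addf_sum (fun x x' => bbDl x x' y)); apply: eq_bigr => l _.
by rewrite Xr bbM rank1NN_rank1NM //; case: vgen.
Qed.

Lemma contract_actl X b m : rlinear X ->
  contract X (bm_l (iota b) m) = contract (fun n => X (bm_l b n)) m.
Proof.
move=> Xlin; have [vlin v1] := vgen; rewrite {2}/contract.
under eq_bigr => l _ do rewrite (bb_contract _ _ Xlin) rank1NME // mul1r.
rewrite -contract_sumr -bm_l_suml -rmorph_sum.
by under eq_bigr do rewrite (proj2 (vlin _)); rewrite -mulr_sumr v1 mulr1.
Qed.

End Contraction.

Section EndoTransport.
Variable phi : A -> A.
Hypothesis phiE : bimod_endo iota phi.

Definition tmap : M -> M :=
  xget (@id M) (fun G =>
    {morph G : m m' / m + m'} /\ forall a n, G (mt a n) = mt (phi a) n).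

Lemma tmap_spec :
  {morph tmap : m m' / m + m'} /\ forall a n, tmap (mt a n) = mt (phi a) n.
Proof.
suff: exists G : M -> M,
    {morph G : m m' / m + m'} /\ forall a n, G (mt a n) = mt (phi a) n.
  by apply: xgetPex.
have [phiD _ phir] := phiE; apply: mt_lift => [a a' n|a n n'|a b n].
- by rewrite phiD mtDl.
- exact: mtDr.
- by rewrite phir mt_mid.
Qed.

Lemma tmapD : {morph tmap : m m' / m + m'}.
Proof. by case: tmap_spec. Qed.

Lemma tmapE a n : tmap (mt a n) = mt (phi a) n.
Proof. by case: tmap_spec. Qed.

Lemma tmap_actl b m : tmap (bm_l (iota b) m) = bm_l (iota b) (tmap m).
Proof.
have [_ phil _] := phiE; elim/mt_ind: m => [|m m' eq eq'|a n].
- by rewrite bm_l0 (addf0 tmapD) bm_l0.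
- by rewrite bm_lD !tmapD eq eq' bm_lD.
- by rewrite -mt_actl !tmapE phil mt_actl.
Qed.

Lemma tmap_actr b' m : tmap (bm_r m (iota' b')) = bm_r (tmap m) (iota' b').
Proof.
elim/mt_ind: m => [|m m' eq eq'|a n].
- by rewrite bm_r0 (addf0 tmapD) bm_r0.
- by rewrite bm_rD !tmapD eq eq' bm_rD.
- by rewrite -mt_actr !tmapE mt_actr.
Qed.

Definition endo_transport (x : A') : A' := endo (fun n => tmap (bm_r (mt 1 n) x)).

Lemma endo_transportE x a n :
  bm_r (mt a n) (endo_transport x) = bm_l a (tmap (bm_r (mt 1 n) x)).
Proof.
rewrite endoE //; split=> [n1 n2|b n1]; first by rewrite mtDr bm_rD tmapD.
by rewrite mt1_actl -bm_lr tmap_actl.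
Qed.

Lemma endo_transport_bimod_endo : bimod_endo iota' endo_transport.
Proof.
split=> [x y|b' x|x b']; apply: endo_ext => a n.
- by rewrite bm_Dr !endo_transportE bm_Dr tmapD bm_lD.
- by rewrite bm_rM -mt_actr !endo_transportE bm_rM -mt_actr.
- by rewrite bm_rM !endo_transportE bm_rM tmap_actr bm_lr.
Qed.

End EndoTransport.

Lemma rank1NM_decomp n (p : 'I_n -> N -> B) (e : 'I_n -> N) x :
  dual_basis p e -> x = \sum_(k < n) rank1NM (p k) (bm_r (mt 1 (e k)) x).
Proof.
case=> plin pe; apply: endo_ext => a m; rewrite bm_r_sumr.
under eq_bigr => k _ do rewrite rank1NME // bm_lr -mt1 mt_mid.
by rewrite -bm_r_suml -mt_sumr pe.
Qed.

Section LeftTransport.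
Local Notation tensL := (@tens _ _ _ (regbm iota iota) (regbm iota idfun)).

Variables (np : nat) (p : 'I_np -> N -> B) (ep : 'I_np -> N).
Hypothesis pdual : dual_basis p ep.
Variables (nq : nat) (t : 'I_nq -> tensor_bimod (regbm iota iota) (regbm iota idfun)).
Variable g : 'I_nq -> A -> A.
Hypothesis tgQ : left_quasibase tensL t g.
Variables (Z : bimod B' A') (bz : regbm iota' iota' -> regbm iota' idfun -> Z).
Hypothesis bzT : is_tensor bz.

Lemma lbzDl x x' y : bz (x + x') y = bz x y + bz x' y.
Proof. by case: bzT => -[+ _ _ _ _] _; apply. Qed.

Lemma lbzDr x y y' : bz x (y + y') = bz x y + bz x y'.
Proof. by case: bzT => -[_ + _ _ _] _; apply. Qed.

Lemma lbz_mid x b' y : bz (x * iota' b') y = bz x (iota' b' * y).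
Proof. by case: bzT => -[_ _ + _ _] _; apply. Qed.

Lemma lbz_actl b' x y : bz (iota' b' * x) y = bm_l b' (bz x y).
Proof. by case: bzT => -[_ _ _ + _] _; apply. Qed.

Lemma lbz_actr x y a : bz x (y * a) = bm_r (bz x y) a.
Proof. by case: bzT => -[_ _ _ _ +] _; apply. Qed.

Definition rank1NM_row (f : N -> B) (u : A) (n : N) : A' := rank1NM f (mt u n).

Lemma rank1NM_row_rlinear f u : lin_form f -> rlinear (rank1NM_row f u).
Proof.
move=> flin; split=> [n n'|n b']; rewrite /rank1NM_row; last first.
  by rewrite mt_actr rank1NM_actr.
by rewrite mtDr rank1NMD.
Qed.

Definition transL_tens (f : N -> B) (m : M)
  (u : regbm iota iota) (w : regbm iota idfun) : Z :=
  contract bz (rank1NM_row f u) (bm_l w m).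

(* The image of [f (x) q (x) m] under
   [N^* (x)_B (A (x)_B A) (x)_A M ~ A' (x)_B' A']. *)
Definition transL (f : N -> B) (q : tensor_bimod (regbm iota iota) (regbm iota idfun))
  (m : M) : Z :=
  tlift (transL_tens f m) q.

Section TransL.
Variable f : N -> B.
Hypothesis flin : lin_form f.

Lemma transL_zbalanced m : zbalanced (transL_tens f m).
Proof.
split=> [u u' w|u w w'|u b w]; rewrite /transL_tens /=.
- have -> : rank1NM_row f (u + u') = fun n => rank1NM_row f u n + rank1NM_row f u' n.
    by apply: funext => n; rewrite /rank1NM_row mtDl rank1NMD.
  exact: contractDl lbzDl _ _ _.
- by rewrite bm_Dl contractDr //; apply: lbzDr.
- rewrite bm_lM contract_actl //; last exact: rank1NM_row_rlinear.
  + by congr contract; apply: funext => n; rewrite /rank1NM_row mt_mid.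
  + exact: lbzDl.
  + exact: lbzDr.
  + exact: lbz_mid.
Qed.

Lemma transLD m : {morph transL f ^~ m : q q' / q + q'}.
Proof. exact: tliftD (transL_zbalanced m). Qed.

Lemma transLE u w m : transL f (tensL u w) m = contract bz (rank1NM_row f u) (bm_l w m).
Proof. exact: (tlift_tens (transL_zbalanced m) u w). Qed.

End TransL.

Lemma transL0 f m : lin_form f -> transL f 0 m = 0.
Proof. by move=> flin; apply: addf0 (transLD flin m). Qed.

Lemma transL_sumt f I (s : seq I) (P : pred I) F m : lin_form f ->
  transL f (\sum_(i <- s | P i) F i) m = \sum_(i <- s | P i) transL f (F i) m.
Proof. by move=> flin; exact: (addf_sum (transLD flin m)). Qed.

Lemma transLDm f q : lin_form f -> {morph transL f q : m m' / m + m'}.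
Proof.
move=> flin m m'; elim/tensor_ind: q => [|q q' eq eq'|u w].
- by rewrite !transL0 ?addr0.
- by rewrite !transLD // eq eq' addrACA.
- by rewrite !transLE // bm_lD contractDr //; apply: lbzDr.
Qed.

Lemma transL_summ f q I (s : seq I) (P : pred I) (F : I -> M) : lin_form f ->
  transL f q (\sum_(i <- s | P i) F i) = \sum_(i <- s | P i) transL f q (F i).
Proof. by move=> flin; exact: (addf_sum (transLDm q flin)). Qed.

Lemma transL_actrt f q c m : lin_form f ->
  transL f (bm_r q c) m = transL f q (bm_l c m).
Proof.
move=> flin; elim/tensor_ind: q => [|q q' eq eq'|u w].
- by rewrite bm_r0 !transL0.
- by rewrite bm_rD !transLD // eq eq'.
- have [_ _ _ _ <-] := tens_balanced (regbm iota iota) (regbm iota idfun).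
  by rewrite !transLE // bm_lM.
Qed.

Lemma transL_actlt f b q m : lin_form f ->
  transL f (bm_l b q) m = transL (fun n => f n * b) q m.
Proof.
move=> flin; have flinb := lin_form_mulr b flin.
elim/tensor_ind: q => [|q q' eq eq'|u w].
- by rewrite bm_l0 !transL0.
- by rewrite bm_lD !transLD // eq eq'.
- have [_ _ _ <- _] := tens_balanced (regbm iota iota) (regbm iota idfun).
  rewrite !transLE //; congr contract; apply: funext => n.
  by rewrite /rank1NM_row /= mt_actl rank1NM_actl.
Qed.

Lemma transL_actl f b' q m : lin_form f ->
  bm_l b' (transL f q m) = transL (fun n => f (bm_r n b')) q m.
Proof.
move=> flin; have flinb := lin_form_actr b' flin.
elim/tensor_ind: q => [|q q' eq eq'|u w].
- by rewrite !transL0 // bm_l0.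
- by rewrite !transLD // bm_lD eq eq'.
- rewrite !transLE // /contract bm_l_sumr; apply: eq_bigr => l _.
  by rewrite -lbz_actl /rank1NM_row rank1NM_mull.
Qed.

Lemma transL_actr f q m y : lin_form f ->
  bm_r (transL f q m) y = transL f q (bm_r m y).
Proof.
move=> flin; elim/tensor_ind: q => [|q q' eq eq'|u w].
- by rewrite !transL0 // bm_r0.
- by rewrite !transLD // bm_rD eq eq'.
- rewrite !transLE // /contract bm_r_suml; apply: eq_bigr => l _.
  by rewrite -lbz_actr bm_lr rank1NM_actr //; case: vgen.
Qed.

Lemma transL_suml I (s : seq I) (P : pred I) (F : I -> N -> B) q m :
  (forall i, lin_form (F i)) ->
  transL (fun n => \sum_(i <- s | P i) F i n) q m =
  \sum_(i <- s | P i) transL (F i) q m.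
Proof.
move=> Flin; have Slin := lin_form_sum s P Flin.
elim/tensor_ind: q => [|q q' eq eq'|u w].
- by rewrite transL0 // big1 // => i _; rewrite transL0.
- by rewrite transLD // eq eq' -big_split; apply: eq_bigr => i _; rewrite transLD.
- rewrite transLE //.
  have -> : rank1NM_row (fun n => \sum_(i <- s | P i) F i n) u =
            fun n => \sum_(i <- s | P i) rank1NM_row (F i) u n.
    by apply: funext => n; rewrite /rank1NM_row rank1NM_suml.
  rewrite contract_suml; last exact: lbzDl.
  by apply: eq_bigr => i _; rewrite transLE.
Qed.

Lemma bz_rank1NM f m : lin_form f ->
  bz (rank1NM f m) 1 = \sum_(i < nq) transL f (t i) (tmap (g i) m).
Proof.
have [gE _ tE] := tgQ; move=> flin; move: m; apply: mt_ext.
- by move=> m m'; rewrite rank1NMD // lbzDl.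
- move=> m m'; rewrite -big_split; apply: eq_bigr => i _.
  by rewrite tmapD // transLDm.
move=> a n; rewrite -[rank1NM f _]/(rank1NM_row f a n).
rewrite (bb_contract lbzDl lbz_mid _ _ (rank1NM_row_rlinear a flin)) bm_r1.
rewrite -[mt 1 n]bm_l1 -transLE // tE transL_sumt //; apply: eq_bigr => i _.
by rewrite transL_actrt // tmapE // -mt1.
Qed.

Definition transL_quasibase (i : 'I_nq) : Z :=
  \sum_(k < np) transL (p k) (t i) (mt 1 (ep k)).

Lemma bz_transL_quasibase x :
  bz x 1 = \sum_(i < nq) bm_r (transL_quasibase i) (endo_transport (g i) x).
Proof.
have [plin _] := pdual; have [gE _ _] := tgQ.
rewrite {1}(rank1NM_decomp x pdual) (addf_sum (fun x x' => lbzDl x x' 1)).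
under eq_bigr => k _ do rewrite bz_rank1NM //.
rewrite exchange_big /=; apply: eq_bigr => i _; rewrite bm_r_suml.
by apply: eq_bigr => k _; rewrite transL_actr // endo_transportE // bm_l1.
Qed.

Lemma transL_quasibase_central i b' :
  bm_l b' (transL_quasibase i) = bm_r (transL_quasibase i) (iota' b').
Proof.
have [plin pe] := pdual; have [_ tC _] := tgQ.
rewrite bm_l_sumr bm_r_suml.
under [RHS]eq_bigr => k _ do rewrite transL_actr // -mt_actr
  -{1}(pe (bm_r (ep k) b')) mt_sumr transL_summ //.
under [RHS]eq_bigr => k _ do under eq_bigr => k' _ do
  rewrite mt1_actl -transL_actrt // -tC transL_actlt //.
rewrite exchange_big /=; apply: eq_bigr => k' _.
rewrite transL_actl // -transL_suml; last by move=> k; apply: lin_form_mulr.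
congr transL; apply: funext => n.
by rewrite (dual_basis_form n pdual (lin_form_actr b' (plin k'))).
Qed.

Lemma left_quasibase_transport :
  left_quasibase bz transL_quasibase (fun i => endo_transport (g i)).
Proof.
have [gE _ _] := tgQ; split=> [i||]; last exact: bz_transL_quasibase.
  exact: endo_transport_bimod_endo.
exact: transL_quasibase_central.
Qed.

End LeftTransport.

Definition rank1MM (F : M -> A) (m : M) : A' :=
  xget 0 (fun x => forall m', bm_r m' x = bm_l (F m') m).

Lemma rank1MME F m m' : lin_form F -> bm_r m' (rank1MM F m) = bm_l (F m') m.
Proof.
case=> FD Fl; move: m'.
suff: exists x, forall m', bm_r m' x = bm_l (F m') m by apply: xgetPex.
have [||x Fx] := morita_full Mmor (f := fun m' => bm_l (F m') m).
- by move=> m1 m2; rewrite FD bm_Dl.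
- by move=> a m1; rewrite Fl bm_lM.
by exists x => m'; rewrite Fx.
Qed.

Lemma rank1MMD F : lin_form F -> {morph rank1MM F : m m' / m + m'}.
Proof.
move=> Flin m m'; apply: (morita_faithful Mmor) => m1.
by rewrite bm_Dr !rank1MME // bm_lD.
Qed.

Lemma rank1MM_actr F m x : lin_form F -> rank1MM F (bm_r m x) = rank1MM F m * x.
Proof.
move=> Flin; apply: (morita_faithful Mmor) => m1.
by rewrite bm_rM !rank1MME // bm_lr.
Qed.

Lemma rank1MM_actl F a m : lin_form F ->
  rank1MM F (bm_l a m) = rank1MM (fun m' => F m' * a) m.
Proof.
move=> Flin; apply: (morita_faithful Mmor) => m1.
by rewrite rank1MME // rank1MME ?bm_lM //; apply: lin_form_mulr.
Qed.

Lemma rank1MM_mull F x m : lin_form F ->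
  x * rank1MM F m = rank1MM (fun m' => F (bm_r m' x)) m.
Proof.
move=> Flin; apply: (morita_faithful Mmor) => m1.
by rewrite bm_rM rank1MME // rank1MME //; apply: lin_form_actr.
Qed.

Lemma rank1MM_suml I (s : seq I) (P : pred I) (F : I -> M -> A) m :
  (forall i, lin_form (F i)) ->
  rank1MM (fun m' => \sum_(i <- s | P i) F i m') m =
  \sum_(i <- s | P i) rank1MM (F i) m.
Proof.
move=> Flin; apply: (morita_faithful Mmor) => m1.
rewrite bm_r_sumr rank1MME; last exact: lin_form_sum.
by rewrite bm_l_suml; apply: eq_bigr => i _; rewrite rank1MME.
Qed.

Lemma rank1MM_decomp n (P : 'I_n -> M -> A) (e : 'I_n -> M) :
  dual_basis P e -> 1 = \sum_(k < n) rank1MM (P k) (e k).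
Proof.
case=> Plin Pe; apply: (morita_faithful Mmor) => m.
by rewrite bm_r1 bm_r_sumr; under eq_bigr => k _ do rewrite rank1MME //; rewrite Pe.
Qed.

Section RightTransport.
Local Notation tensR := (@tens _ _ _ (regbm idfun iota) (regbm iota iota)).

Variables (nP : nat) (P : 'I_nP -> M -> A) (eP : 'I_nP -> M).
Hypothesis Pdual : dual_basis P eP.
Variables (nq : nat) (t : 'I_nq -> tensor_bimod (regbm idfun iota) (regbm iota iota)).
Variable g : 'I_nq -> A -> A.
Hypothesis tgQ : right_quasibase tensR t g.
Variables (Z : bimod A' B') (bz : regbm idfun iota' -> regbm iota' iota' -> Z).
Hypothesis bzT : is_tensor bz.

Lemma rbzDl x x' y : bz (x + x') y = bz x y + bz x' y.
Proof. by case: bzT => -[+ _ _ _ _] _; apply. Qed.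

Lemma rbzDr x y y' : bz x (y + y') = bz x y + bz x y'.
Proof. by case: bzT => -[_ + _ _ _] _; apply. Qed.

Lemma rbz_mid x b' y : bz (x * iota' b') y = bz x (iota' b' * y).
Proof. by case: bzT => -[_ _ + _ _] _; apply. Qed.

Lemma rbz_actl a x y : bz (a * x) y = bm_l a (bz x y).
Proof. by case: bzT => -[_ _ _ + _] _; apply. Qed.

Lemma rbz_actr x y b' : bz x (y * iota' b') = bm_r (bz x y) b'.
Proof. by case: bzT => -[_ _ _ _ +] _; apply. Qed.

Definition rank1MM_row (F : M -> A) (u : A) (n : N) : A' := rank1MM F (mt u n).

Lemma rank1MM_row_rlinear F u : lin_form F -> rlinear (rank1MM_row F u).
Proof.
move=> Flin; split=> [n n'|n b']; rewrite /rank1MM_row; last first.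
  by rewrite mt_actr rank1MM_actr.
by rewrite mtDr rank1MMD.
Qed.

Definition transR_tens (F : M -> A) (n : N)
  (u : regbm idfun iota) (w : regbm iota iota) : Z :=
  contract bz (rank1MM_row F u) (mt w n).

(* The image of [F (x) q (x) n] under
   [M^* (x)_A (A (x)_B A) (x)_B N ~ A' (x)_B' A']. *)
Definition transR (F : M -> A) (q : tensor_bimod (regbm idfun iota) (regbm iota iota))
  (n : N) : Z :=
  tlift (transR_tens F n) q.

Section TransR.
Variable F : M -> A.
Hypothesis Flin : lin_form F.

Lemma transR_zbalanced n : zbalanced (transR_tens F n).
Proof.
split=> [u u' w|u w w'|u b w]; rewrite /transR_tens /=.
- have -> : rank1MM_row F (u + u') = fun n => rank1MM_row F u n + rank1MM_row F u' n.
    by apply: funext => n'; rewrite /rank1MM_row mtDl rank1MMD.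
  exact: contractDl rbzDl _ _ _.
- by rewrite mtDl contractDr //; apply: rbzDr.
- rewrite mt_actl contract_actl //; last exact: rank1MM_row_rlinear.
  + by congr contract; apply: funext => n'; rewrite /rank1MM_row mt_mid.
  + exact: rbzDl.
  + exact: rbzDr.
  + exact: rbz_mid.
Qed.

Lemma transRD n : {morph transR F ^~ n : q q' / q + q'}.
Proof. exact: tliftD (transR_zbalanced n). Qed.

Lemma transRE u w n : transR F (tensR u w) n = contract bz (rank1MM_row F u) (mt w n).
Proof. exact: (tlift_tens (transR_zbalanced n) u w). Qed.

End TransR.

Lemma transR0 F n : lin_form F -> transR F 0 n = 0.
Proof. by move=> Flin; apply: addf0 (transRD Flin n). Qed.

Lemma transR_sumt F I (s : seq I) (Q : pred I) G n : lin_form F ->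
  transR F (\sum_(i <- s | Q i) G i) n = \sum_(i <- s | Q i) transR F (G i) n.
Proof. by move=> Flin; exact: (addf_sum (transRD Flin n)). Qed.

Lemma transRDn F q : lin_form F -> {morph transR F q : n n' / n + n'}.
Proof.
move=> Flin n n'; elim/tensor_ind: q => [|q q' eq eq'|u w].
- by rewrite !transR0 ?addr0.
- by rewrite !transRD // eq eq' addrACA.
- by rewrite !transRE // mtDr contractDr //; apply: rbzDr.
Qed.

Lemma transR_actrt F q b n : lin_form F ->
  transR F (bm_r q b) n = transR F q (bm_l b n).
Proof.
move=> Flin; elim/tensor_ind: q => [|q q' eq eq'|u w].
- by rewrite bm_r0 !transR0.
- by rewrite bm_rD !transRD // eq eq'.
- have [_ _ _ _ <-] := tens_balanced (regbm idfun iota) (regbm iota iota).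
  by rewrite !transRE // mt_mid.
Qed.

Lemma transR_actlt F a q n : lin_form F ->
  transR F (bm_l a q) n = transR (fun m => F m * a) q n.
Proof.
move=> Flin; have Flina := lin_form_mulr a Flin.
elim/tensor_ind: q => [|q q' eq eq'|u w].
- by rewrite bm_l0 !transR0.
- by rewrite bm_lD !transRD // eq eq'.
- have [_ _ _ <- _] := tens_balanced (regbm idfun iota) (regbm iota iota).
  rewrite !transRE //; congr contract; apply: funext => n'.
  by rewrite /rank1MM_row /= mt_actl rank1MM_actl.
Qed.

Lemma transR_actl F x q n : lin_form F ->
  bm_l x (transR F q n) = transR (fun m => F (bm_r m x)) q n.
Proof.
move=> Flin; have Flinx := lin_form_actr x Flin.
elim/tensor_ind: q => [|q q' eq eq'|u w].
- by rewrite !transR0 // bm_l0.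
- by rewrite !transRD // bm_lD eq eq'.
- rewrite !transRE // /contract bm_l_sumr; apply: eq_bigr => l _.
  by rewrite -rbz_actl /rank1MM_row rank1MM_mull.
Qed.

Lemma transR_actr F q n b' : lin_form F ->
  bm_r (transR F q n) b' = transR F q (bm_r n b').
Proof.
move=> Flin; elim/tensor_ind: q => [|q q' eq eq'|u w].
- by rewrite !transR0 // bm_r0.
- by rewrite !transRD // bm_rD eq eq'.
- rewrite !transRE // /contract bm_r_suml; apply: eq_bigr => l _.
  by rewrite -rbz_actr mt_actr rank1NM_actr //; case: vgen.
Qed.

Lemma transR_suml I (s : seq I) (Q : pred I) (G : I -> M -> A) q n :
  (forall i, lin_form (G i)) ->
  transR (fun m => \sum_(i <- s | Q i) G i m) q n =
  \sum_(i <- s | Q i) transR (G i) q n.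
Proof.
move=> Glin; have Slin := lin_form_sum s Q Glin.
elim/tensor_ind: q => [|q q' eq eq'|u w].
- by rewrite transR0 // big1 // => i _; rewrite transR0.
- by rewrite transRD // eq eq' -big_split; apply: eq_bigr => i _; rewrite transRD.
- rewrite transRE //.
  have -> : rank1MM_row (fun m => \sum_(i <- s | Q i) G i m) u =
            fun n => \sum_(i <- s | Q i) rank1MM_row (G i) u n.
    by apply: funext => n'; rewrite /rank1MM_row rank1MM_suml.
  rewrite contract_suml; last exact: rbzDl.
  by apply: eq_bigr => i _; rewrite transRE.
Qed.

(* [a (x) n |-> transR F (a t_i) n], well defined because [t_i] is B-central. *)
Definition transRq (F : M -> A) (i : 'I_nq) : M -> Z :=
  xget (fun _ => 0) (fun G => {morph G : m m' / m + m'} /\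
    forall a n, G (mt a n) = transR F (bm_l a (t i)) n).

Lemma transRq_spec F i : lin_form F ->
  {morph transRq F i : m m' / m + m'} /\
  forall a n, transRq F i (mt a n) = transR F (bm_l a (t i)) n.
Proof.
move=> Flin; have [_ tC _] := tgQ.
suff: exists G : M -> Z, {morph G : m m' / m + m'} /\
    forall a n, G (mt a n) = transR F (bm_l a (t i)) n by apply: xgetPex.
apply: mt_lift => [a a' n|a n n'|a b n].
- by rewrite bm_Dl transRD.
- exact: transRDn.
- by rewrite bm_lM -tC bm_lr transR_actrt.
Qed.

Lemma transRqD F i : lin_form F -> {morph transRq F i : m m' / m + m'}.
Proof. by move=> Flin; case: (transRq_spec i Flin). Qed.

Lemma transRqE F i a n : lin_form F -> transRq F i (mt a n) = transR F (bm_l a (t i)) n.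
Proof. by move=> Flin; case: (transRq_spec i Flin). Qed.

Lemma transRq_sum F i I (s : seq I) (Q : pred I) (G : I -> M) : lin_form F ->
  transRq F i (\sum_(j <- s | Q j) G j) = \sum_(j <- s | Q j) transRq F i (G j).
Proof. by move=> Flin; exact: (addf_sum (transRqD i Flin)). Qed.

Lemma transRq_actl F i x m : lin_form F ->
  bm_l x (transRq F i m) = transRq (fun m' => F (bm_r m' x)) i m.
Proof.
move=> Flin; have Flinx := lin_form_actr x Flin; move: m; apply: mt_ext.
- by move=> m m'; rewrite transRqD // bm_lD.
- exact: transRqD.
- by move=> a n; rewrite !transRqE // transR_actl.
Qed.

Lemma transRq_actr F i m b' : lin_form F ->
  bm_r (transRq F i m) b' = transRq F i (bm_r m (iota' b')).
Proof.
move=> Flin; move: m; apply: mt_ext.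
- by move=> m m'; rewrite transRqD // bm_rD.
- by move=> m m'; rewrite bm_rD transRqD.
- by move=> a n; rewrite -mt_actr !transRqE // transR_actr.
Qed.

Lemma transRq_actlm F i a m : lin_form F ->
  transRq F i (bm_l a m) = transRq (fun m' => F m' * a) i m.
Proof.
move=> Flin; have Flina := lin_form_mulr a Flin; move: m; apply: mt_ext.
- by move=> m m'; rewrite bm_lD transRqD.
- exact: transRqD.
- by move=> a' n; rewrite -mt_actl !transRqE // bm_lM transR_actlt.
Qed.

Lemma transRq_suml I (s : seq I) (Q : pred I) (G : I -> M -> A) i m :
  (forall j, lin_form (G j)) ->
  transRq (fun m' => \sum_(j <- s | Q j) G j m') i m =
  \sum_(j <- s | Q j) transRq (G j) i m.
Proof.
move=> Glin; have Slin := lin_form_sum s Q Glin; move: m; apply: mt_ext.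
- exact: transRqD.
- by move=> m m'; rewrite -big_split; apply: eq_bigr => j _; rewrite transRqD.
- move=> a n; rewrite transRqE // transR_suml //.
  by apply: eq_bigr => j _; rewrite transRqE.
Qed.

Lemma contract_transRq F u m0 : lin_form F ->
  contract bz (rank1MM_row F u) m0 = \sum_(i < nq) transRq F i (bm_l u (tmap (g i) m0)).
Proof.
have [gE _ tE] := tgQ; move=> Flin; move: m0; apply: mt_ext.
- by move=> m m'; rewrite contractDr //; apply: rbzDr.
- move=> m m'; rewrite -big_split; apply: eq_bigr => i _.
  by rewrite tmapD // bm_lD transRqD.
move=> w n; rewrite -transRE //.
have -> : tensR u w = bm_l u (tensR 1 w).
  have [_ _ _ <- _] := tens_balanced (regbm idfun iota) (regbm iota iota).
  by rewrite /= mulr1.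
rewrite tE bm_l_sumr transR_sumt //; apply: eq_bigr => i _.
by rewrite -bm_lM -transRqE // tmapE // -mt_actl.
Qed.

Lemma bz_rank1MM F m y : lin_form F ->
  bz (rank1MM F m) y = \sum_(i < nq) transRq F i (bm_r m (endo_transport (g i) y)).
Proof.
have [gE _ _] := tgQ; move=> Flin; move: m; apply: mt_ext.
- by move=> m m'; rewrite rank1MMD // rbzDl.
- move=> m m'; rewrite -big_split; apply: eq_bigr => i _.
  by rewrite bm_rD transRqD.
move=> a n; rewrite -[rank1MM F _]/(rank1MM_row F a n).
rewrite (bb_contract rbzDl rbz_mid _ _ (rank1MM_row_rlinear a Flin)).
rewrite contract_transRq //; apply: eq_bigr => i _.
by rewrite endo_transportE.
Qed.

Definition transR_quasibase (i : 'I_nq) : Z := \sum_(k < nP) transRq (P k) i (eP k).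

Lemma transR_quasibase_actr i x :
  \sum_(k < nP) transRq (fun m => P k (bm_r m x)) i (eP k) =
  \sum_(k < nP) transRq (P k) i (bm_r (eP k) x).
Proof.
have [Plin Pe] := Pdual.
under [RHS]eq_bigr => k _ do rewrite -{1}(Pe (bm_r (eP k) x)) transRq_sum //.
under [RHS]eq_bigr => k _ do under eq_bigr => k' _ do rewrite transRq_actlm //.
rewrite exchange_big /=; apply: eq_bigr => k' _.
rewrite -transRq_suml; last by move=> k; apply: lin_form_mulr.
congr transRq; apply: funext => m.
by rewrite (dual_basis_form m Pdual (lin_form_actr x (Plin k'))).
Qed.

Lemma bz_transR_quasibase y :
  bz 1 y = \sum_(i < nq) bm_l (endo_transport (g i) y) (transR_quasibase i).
Proof.
have [Plin _] := Pdual; have [gE _ _] := tgQ.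
rewrite (rank1MM_decomp Pdual) (addf_sum (fun x x' => rbzDl x x' y)).
under eq_bigr => k _ do rewrite bz_rank1MM //.
rewrite exchange_big /=; apply: eq_bigr => i _; rewrite bm_l_sumr.
by under [RHS]eq_bigr => k _ do rewrite transRq_actl //; rewrite transR_quasibase_actr.
Qed.

Lemma transR_quasibase_central i b' :
  bm_r (transR_quasibase i) b' = bm_l (iota' b') (transR_quasibase i).
Proof.
have [Plin _] := Pdual; rewrite bm_l_sumr bm_r_suml.
under eq_bigr => k _ do rewrite transRq_actr //.
under [RHS]eq_bigr => k _ do rewrite transRq_actl //.
by rewrite transR_quasibase_actr.
Qed.

Lemma right_quasibase_transport :
  right_quasibase bz transR_quasibase (fun i => endo_transport (g i)).
Proof.
have [gE _ _] := tgQ; split=> [i||]; last exact: bz_transR_quasibase.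
  exact: endo_transport_bimod_endo.
exact: transR_quasibase_central.
Qed.

End RightTransport.
End MoritaEquivalence.

Theorem theorem3p3 (B A : pzRingType) (iota : {rmorphism B -> A})
  (B' A' : pzRingType) (iota' : {rmorphism B' -> A'}) :
  ring_ext iota -> ring_ext iota' -> morita_equiv iota iota' ->
  (left_D2 iota -> left_D2 iota') /\ (right_D2 iota -> right_D2 iota').
Proof.
move=> _ _ [M [N [Mmor Nmor [bt btT]]]].
have [[/div_regular_dual_basis [np [p [ep pB]]]
       /regular_div_generating_system [nv [v [ev vG]]]] _ _] := Nmor.
have [[/div_regular_dual_basis [nP [P [eP PB]]] _] _ _] := Mmor.
split=> [/left_D2_quasibase [n [t [g tgQ]]] | /right_D2_quasibase [n [t [g tgQ]]]]
  Z bz bzT.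
- have tgQ' := left_quasibase_transport Mmor Nmor btT vG pB tgQ bzT.
  exact: left_quasibase_div bzT tgQ'.
- have tgQ' := right_quasibase_transport Mmor Nmor btT vG PB tgQ bzT.
  exact: right_quasibase_div bzT tgQ'.
Qed.
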